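(* Let $\Gamma$ be a connected, undirected graph without loops on $n$ nodes with Laplacian $\mathbf L=\mathbf K-\mathbf A$, and let $\phi_1,\dots,\phi_n$ be an orthonormal basis of eigenvectors of $\mathbf L$ with $\mathbf L\phi_j=\mu_j\phi_j$. Let $$\mathbf G=\begin{bmatrix}\mathbf 0&\mathbf I\\-\mathbf I&-\mathbf L\end{bmatrix},\qquad \mathbf U=\mathbf G(\mathbf G^T\mathbf G)^{-1/2},$$ $\lambda_j^{P+}=\tfrac12\big[\sqrt{\mu_j^2+4}+\mu_j\big]$ and $\theta_j=2\arctan\lambda_j^{P+}$. Then the eigenvalues of $\mathbf U$ are the $n$ pairs $$\lambda_j^{U\pm}=\cos\theta_j\pm i\sin\theta_j=e^{\pm i\theta_j},\quad j=1,\dots,n,$$ with corresponding normalized eigenvectors $$\psi_j^{U\pm}=\frac{1}{\sqrt2}\begin{bmatrix}\phi_j\\ \pm i\phi_j\end{bmatrix}.$$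
   Context: $\mathbf A$ is the adjacency matrix, $\mathbf K$ the diagonal degree matrix, $\mathbf I,\mathbf 0$ the $n\times n$ identity and zero matrices; $(\mathbf G^T\mathbf G)^{-1/2}$ is the inverse of the positive definite square root of $\mathbf G^T\mathbf G$. *)

From mathcomp Require Import all_boot all_order all_algebra.
From mathcomp Require Import reals trigo.
From mathcomp.real_closed Require Import complex.
Set Implicit Arguments. Unset Strict Implicit. Unset Printing Implicit Defensive.
Import GRing.Theory Num.Theory.
Local Open Scope ring_scope.

Section Defs.
Variable R : realType.

Definition adjmx n (e : rel 'I_n) : 'M[R]_n := \matrix_(i, j) (e i j)%:R.

Definition degmx n (e : rel 'I_n) : 'M[R]_n :=
  diag_mx (\row_i (\sum_j adjmx e i j)).

Definition laplacian n (e : rel 'I_n) : 'M[R]_n := degmx e - adjmx e.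

Definition Gmx n (L : 'M[R]_n) : 'M[R]_(n + n) :=
  block_mx 0 1%:M (- 1%:M) (- L).

Definition posdef m (S : 'M[R]_m) : Prop :=
  S^T = S /\ forall v : 'cV[R]_m, v != 0 -> 0 < (v^T *m S *m v) 0 0.

(* S is "the" inverse of the positive definite square root of M:
   S is positive definite and S^2 is the inverse of M *)
Definition is_inv_sqrt m (M S : 'M[R]_m) : Prop :=
  posdef S /\ S *m S *m M = 1%:M.

Definition cmx m p (M : 'M[R]_(m, p)) : 'M[R[i]]_(m, p) :=
  map_mx (fun x => Complex x 0) M.

Definition lamPplus (mu : R) : R := (Num.sqrt (mu ^+ 2 + 4) + mu) / 2.
Definition theta (mu : R) : R := 2 * atan (lamPplus mu).

Definition lamUp (mu : R) : R[i] := Complex (cos (theta mu)) (sin (theta mu)).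
Definition lamUm (mu : R) : R[i] := Complex (cos (theta mu)) (- sin (theta mu)).

Definition psiUp n (phi : 'cV[R]_n) : 'cV[R[i]]_(n + n) :=
  Complex (Num.sqrt 2)^-1 0 *: col_mx (cmx phi) (Complex 0 1 *: cmx phi).
Definition psiUm n (phi : 'cV[R]_n) : 'cV[R[i]]_(n + n) :=
  Complex (Num.sqrt 2)^-1 0 *: col_mx (cmx phi) (Complex 0 (-1) *: cmx phi).

Definition adjc m p (M : 'M[R[i]]_(m, p)) : 'M[R[i]]_(p, m) :=
  (map_mx Num.conj M)^T.

End Defs.

(* For a unit eigenvector x of L with eigenvalue mu, write mu = l - 1/l with
   l = lamPplus mu > 0.  On the plane spanned by [x; 0] and [0; x], G^T G has
   the eigenvectors [x; l x] and [x; -x/l] with eigenvalues l^2 and l^-2, so the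
   inverse square root S scales them by 1/l and l, and U = G S sends them to
   [x; -l x] and -[x; x/l].  Hence U acts on that plane as the rotation by
   theta = 2 atan l, with complex eigenvectors [x; +-i x].  The 2n vectors
   [phi_j; +-i phi_j] are orthogonal of norm sqrt 2, so they form a basis in
   which U is diagonal with the entries e^(+-i theta_j). *)

From mathcomp Require Import all_boot all_order all_algebra.
From mathcomp Require Import reals trigo.
From mathcomp.real_closed Require Import complex.
From mathcomp Require Import ring lra.
Set Implicit Arguments. Unset Strict Implicit. Unset Printing Implicit Defensive.
Import Order.TTheory GRing.Theory Num.Theory.
Local Open Scope ring_scope.

Section Angles.
Variable R : realType.
Implicit Types m x : R.

Lemma lamPplus_gt0 m : 0 < lamPplus m.
Proof.
have lt_m : `|m| < Num.sqrt (m ^+ 2 + 4).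
  by rewrite -sqrtr_sqr ltr_sqrt ?ltrDl // ltr_wpDl ?sqr_ge0.
by rewrite divr_gt0 // -ltrBlDr sub0r (le_lt_trans _ lt_m) // -normrN ler_norm.
Qed.

Lemma lamPplus_sqr m : lamPplus m ^+ 2 = m * lamPplus m + 1.
Proof.
have sq : Num.sqrt (m ^+ 2 + 4) ^+ 2 = m ^+ 2 + 4 by rewrite sqr_sqrtr ?addr_ge0 ?sqr_ge0.
rewrite /lamPplus; move: sq; set r := Num.sqrt _ => sq.
have -> : ((r + m) / 2) ^+ 2 = (r ^+ 2 + 2 * r * m + m ^+ 2) / 4 by field.
by rewrite sq; field.
Qed.

Lemma lamPplus_subV m : lamPplus m - (lamPplus m)^-1 = m.
Proof.
have l_neq0 : lamPplus m != 0 by rewrite gt_eqF ?lamPplus_gt0.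
apply: (mulIf l_neq0); rewrite mulrBl mulVf // -expr2 lamPplus_sqr; ring.
Qed.

Lemma sqr_cos_atan x : cos (atan x) ^+ 2 = (1 + x ^+ 2)^-1.
Proof. by rewrite cos_atan exprVn sqr_sqrtr // addr_ge0 ?sqr_ge0. Qed.

Lemma cos_2atan x : cos (2 * atan x) = (1 - x ^+ 2) / (1 + x ^+ 2).
Proof.
have x2_neq0 : 1 + x ^+ 2 != 0 by rewrite gt_eqF // ltr_pwDl ?sqr_ge0.
by rewrite mulr_natl cos_mulr2n sqr_cos_atan; field.
Qed.

Lemma sin_2atan x : sin (2 * atan x) = 2 * x / (1 + x ^+ 2).
Proof.
have x2_neq0 : 1 + x ^+ 2 != 0 by rewrite gt_eqF // ltr_pwDl ?sqr_ge0.
have [/cos_gt0_pihalf/gt_eqF cos_neq0 tan_atan] := atan_def x.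
have sin_atan : sin (atan x) = x * cos (atan x).
  by rewrite -[X in X * _]tan_atan /tan divfK ?cos_neq0.
rewrite mulr_natl sin_mulr2n sin_atan mulrCA -expr2 sqr_cos_atan -mulr_natl.
by field.
Qed.

End Angles.

Lemma mulmx_eigenZ (F : comNzRingType) m p (A : 'M[F]_m) (v : 'M[F]_(m, p)) (l a : F) :
  A *m v = l *: v -> A *m (a *: v) = l *: (a *: v).
Proof. by rewrite -scalemxAr => ->; rewrite !scalerA mulrC. Qed.

Lemma mulmx_diag_eigen (F : comNzRingType) m k (A : 'M[F]_m) (V : 'M[F]_(m, k))
    (d : 'rV[F]_k) :
  (forall j, A *m col j V = d 0 j *: col j V) -> A *m V = V *m diag_mx d.
Proof.
move=> eig; apply/matrixP => i j; rewrite mul_mx_diag mxE mulrC.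
by have := congr1 (fun M : 'cV_m => M i 0) (eig j); rewrite [in A *m _]colE mulmxA -colE !mxE.
Qed.

Lemma char_poly_similar (F : fieldType) k (A D P : 'M[F]_k) :
  P \in unitmx -> A *m P = P *m D -> char_poly A = char_poly D.
Proof.
move=> P_unit AP_PD.
have : char_poly_mx A *m map_mx polyC P = map_mx polyC P *m char_poly_mx D.
  by rewrite mulmxBl mulmxBr -!map_mxM AP_PD mul_scalar_mx mul_mx_scalar.
move/(congr1 determinant); rewrite !det_mulmx det_map_mx [RHS]mulrC => /mulIf; apply.
by rewrite polyC_eq0 -unitfE -unitmxE.
Qed.

Lemma mulmx_rotation (F : fieldType) m p (U : 'M[F]_m) (P Q : 'M[F]_(m, p)) (l : F) :
  l != 0 -> 1 + l ^+ 2 != 0 ->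
  U *m (P + l *: Q) = P - l *: Q -> U *m (P - l^-1 *: Q) = - (P + l^-1 *: Q) ->
  U *m P = ((1 - l ^+ 2) / (1 + l ^+ 2)) *: P - (2 * l / (1 + l ^+ 2)) *: Q /\
  U *m Q = (2 * l / (1 + l ^+ 2)) *: P + ((1 - l ^+ 2) / (1 + l ^+ 2)) *: Q.
Proof.
move=> l_neq0 l2_neq0; rewrite mulmxDr mulmxBr -!scalemxAr.
move: (U *m P) (U *m Q) => UP UQ /matrixP eq_p /matrixP eq_m.
split; apply/matrixP => i j; move: (eq_p i j) (eq_m i j); rewrite !mxE => e_p e_m.
- have -> : UP i j = ((UP i j + l * UQ i j) + l ^+ 2 * (UP i j - l^-1 * UQ i j)) / (1 + l ^+ 2).
    by field; rewrite l2_neq0 l_neq0.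
  by rewrite e_p e_m; field; rewrite l2_neq0 l_neq0.
- have -> : UQ i j = l * ((UP i j + l * UQ i j) - (UP i j - l^-1 * UQ i j)) / (1 + l ^+ 2).
    by field; rewrite l2_neq0 l_neq0.
  by rewrite e_p e_m; field; rewrite l2_neq0 l_neq0.
Qed.

Section InvSqrt.
Variable R : realType.

Lemma trmx_mul_self_ge0 m (u : 'cV[R]_m) : 0 <= (u^T *m u) 0 0.
Proof. by rewrite mxE sumr_ge0 // => i _; rewrite mxE -expr2 sqr_ge0. Qed.

(* [S v - a v] is an eigenvector of [S] for [- a], which positivity forbids. *)
Lemma posdef_sqr_eigen m (S : 'M[R]_m) (v : 'cV[R]_m) (a : R) :
  posdef S -> 0 < a -> S *m (S *m v) = a ^+ 2 *: v -> S *m v = a *: v.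
Proof.
move=> [_ S_pos] a_gt0 SSv; apply/eqP; rewrite -subr_eq0; apply/negPn/negP.
set u := S *m v - a *: v => u_neq0.
have Su : S *m u = - a *: u.
  by rewrite mulmxBr SSv -scalemxAr scalerBr scalerA mulNr -expr2 !scaleNr opprK addrC.
have := S_pos u u_neq0; rewrite -mulmxA Su -scalemxAr mxE.
have := trmx_mul_self_ge0 u; nra.
Qed.

Lemma inv_sqrt_eigen m (M S : 'M[R]_m) (v : 'cV[R]_m) (a : R) :
  is_inv_sqrt M S -> 0 < a -> M *m v = a ^+ 2 *: v -> S *m v = a^-1 *: v.
Proof.
move=> [S_pos SSM] a_gt0 Mv; apply: posdef_sqr_eigen; rewrite ?invr_gt0 //.
have a2_neq0 : a ^+ 2 != 0 by rewrite expf_neq0 ?gt_eqF.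
apply: (scalerI a2_neq0); rewrite scalerA -exprMn mulfV ?gt_eqF // expr1n scale1r.
by rewrite 2!scalemxAr -Mv !mulmxA SSM mul1mx.
Qed.

End InvSqrt.

Section Gmx.
Variables (R : realType) (n : nat) (L : 'M[R]_n).
Hypothesis L_sym : L^T = L.
Variables (x : 'cV[R]_n) (k : R).
Hypothesis k_neq0 : k != 0.
Hypothesis Lx : L *m x = (k - k^-1) *: x.

Lemma Gmx_col_mx (a b : 'cV[R]_n) : Gmx L *m col_mx a b = col_mx b (- a - L *m b).
Proof. by rewrite mul_block_col mul0mx add0r !mul1mx !mulNmx mul1mx. Qed.

Lemma trGmx_col_mx (a b : 'cV[R]_n) :
  (Gmx L)^T *m col_mx a b = col_mx (- b) (a - L^T *m b).
Proof.
by rewrite tr_block_mx mul_block_col trmx0 mul0mx add0r !linearN /= trmx1 !mulNmx !mul1mx.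
Qed.

Lemma Gmx_pair : Gmx L *m col_mx x (k *: x) = k *: col_mx x (- k *: x).
Proof.
rewrite Gmx_col_mx scale_col_mx -scalemxAr Lx; congr col_mx.
by apply/matrixP => i j; rewrite !mxE; field.
Qed.

Lemma trGmx_pair : (Gmx L)^T *m col_mx x (- k *: x) = k *: col_mx x (k *: x).
Proof.
rewrite trGmx_col_mx L_sym scale_col_mx -scalemxAr Lx; congr col_mx.
  by rewrite scaleNr opprK.
by apply/matrixP => i j; rewrite !mxE; field.
Qed.

Lemma GmxS_pair (S : 'M[R]_(n + n)) :
  is_inv_sqrt ((Gmx L)^T *m Gmx L) S ->
  Gmx L *m S *m col_mx x (k *: x) = (k / `|k|) *: col_mx x (- k *: x).
Proof.
move=> S_inv_sqrt.
have GTG_pair : (Gmx L)^T *m Gmx L *m col_mx x (k *: x) = `|k| ^+ 2 *: col_mx x (k *: x).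
  by rewrite -mulmxA Gmx_pair -scalemxAr trGmx_pair scalerA -expr2 real_normK ?num_real.
rewrite -mulmxA (inv_sqrt_eigen S_inv_sqrt _ GTG_pair) ?normr_gt0 //.
by rewrite -scalemxAr Gmx_pair scalerA mulrC.
Qed.

End Gmx.

Lemma GmxS_rotation (R : realType) n (L : 'M[R]_n) (S : 'M[R]_(n + n)) (x : 'cV[R]_n) (l : R) :
  L^T = L -> is_inv_sqrt ((Gmx L)^T *m Gmx L) S -> 0 < l -> L *m x = (l - l^-1) *: x ->
  Gmx L *m S *m col_mx x 0
    = ((1 - l ^+ 2) / (1 + l ^+ 2)) *: col_mx x 0 - (2 * l / (1 + l ^+ 2)) *: col_mx 0 x /\
  Gmx L *m S *m col_mx 0 x
    = (2 * l / (1 + l ^+ 2)) *: col_mx x 0 + ((1 - l ^+ 2) / (1 + l ^+ 2)) *: col_mx 0 x.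
Proof.
move=> L_sym S_inv_sqrt l_gt0 Lx; have l_neq0 : l != 0 by rewrite gt_eqF.
have pairE k : col_mx x (k *: x) = col_mx x 0 + k *: col_mx 0 x.
  by rewrite scale_col_mx scaler0 add_col_mx addr0 add0r.
apply: mulmx_rotation => //; first by rewrite gt_eqF // ltr_pwDl ?sqr_ge0.
  have := GmxS_pair L_sym l_neq0 Lx S_inv_sqrt.
  by rewrite gtr0_norm // divff // scale1r !pairE scaleNr.
have Lx' : L *m x = (- l^-1 - (- l^-1)^-1) *: x by rewrite Lx invrN invrK opprK addrC.
have := GmxS_pair L_sym _ Lx' S_inv_sqrt; rewrite oppr_eq0 invr_eq0 => /(_ l_neq0).
by rewrite normrN gtr0_norm ?invr_gt0 // mulNr divff ?invr_eq0 // scaleN1r opprK !pairE scaleNr.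
Qed.

Section Complexify.
Variable R : realType.

Lemma cmxE m p (M : 'M[R]_(m, p)) : cmx M = map_mx (real_complex R) M.
Proof. by []. Qed.

Lemma cmxM m k p (A : 'M[R]_(m, k)) (B : 'M[R]_(k, p)) :
  cmx (A *m B) = cmx A *m cmx B.
Proof. by rewrite !cmxE map_mxM. Qed.

Lemma cmx1 m : cmx (1%:M : 'M[R]_m) = 1%:M.
Proof. by rewrite cmxE map_mx1. Qed.

Lemma cmx_rotation_eigen m p (U : 'M[R]_m) (P Q : 'M[R]_(m, p)) (c s t : R) :
  U *m P = c *: P - s *: Q -> U *m Q = s *: P + c *: Q -> t ^+ 2 = 1 ->
  cmx U *m (cmx P + Complex 0 t *: cmx Q)
    = Complex c (t * s) *: (cmx P + Complex 0 t *: cmx Q).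
Proof.
move=> UP UQ t2; rewrite mulmxDr -scalemxAr -!cmxM UP UQ.
apply/matrixP => i j; rewrite !mxE; move: (P i j) (Q i j) => a b.
simpc; apply/eqP; rewrite eq_complex /=; apply/andP; split; apply/eqP; last ring.
by rewrite -[s * b]mul1r -t2; ring.
Qed.

Lemma conjC_complex (a b : R) : Num.conj (Complex a b) = Complex a (- b).
Proof.
have real_C (y : R) : Complex y 0 \is Num.real by rewrite complex_real.
have -> : Complex a b = Complex a 0 + 'i * Complex b 0 by rewrite -complexiE; simpc.
by rewrite conjC_rect // -complexiE; simpc.
Qed.

Lemma adjcZ m p (a : R[i]) (M : 'M[R[i]]_(m, p)) :
  adjc (a *: M) = Num.conj a *: adjc M.
Proof. by rewrite /adjc map_mxZ linearZ. Qed.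

Lemma adjc_col_mx m1 m2 p (A : 'M[R[i]]_(m1, p)) (B : 'M[R[i]]_(m2, p)) :
  adjc (col_mx A B) = row_mx (adjc A) (adjc B).
Proof. by rewrite /adjc map_col_mx tr_col_mx. Qed.

Lemma adjc_row_mx m p1 p2 (A : 'M[R[i]]_(m, p1)) (B : 'M[R[i]]_(m, p2)) :
  adjc (row_mx A B) = col_mx (adjc A) (adjc B).
Proof. by rewrite /adjc map_row_mx tr_row_mx. Qed.

Lemma adjc_cmx m p (M : 'M[R]_(m, p)) : adjc (cmx M) = cmx M^T.
Proof.
by apply/matrixP => i j; rewrite !mxE conjC_complex oppr0.
Qed.

End Complexify.

Section Stack.
Variable R : realType.

Definition cstack (t : R) m p (X : 'M[R]_(m, p)) : 'M[R[i]]_(m + m, p) :=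
  col_mx (cmx X) (Complex 0 t *: cmx X).

Lemma cstackE (t : R) m p (X : 'M[R]_(m, p)) :
  cstack t X = cmx (col_mx X 0) + Complex 0 t *: cmx (col_mx 0 X).
Proof.
by rewrite /cstack !cmxE !map_col_mx !map_mx0 scale_col_mx scaler0 add_col_mx addr0 add0r.
Qed.

Lemma col_cstack (t : R) m p (X : 'M[R]_(m, p)) j :
  col j (cstack t X) = cstack t (col j X).
Proof. by rewrite /cstack col_col_mx; congr col_mx; apply/matrixP => a b; rewrite !mxE. Qed.

Lemma adjc_cstack_mul (a b : R) m p q (X : 'M[R]_(m, p)) (Y : 'M[R]_(m, q)) :
  adjc (cstack a X) *m cstack b Y = Complex (1 + a * b) 0 *: cmx (X^T *m Y).
Proof.
rewrite adjc_col_mx mul_row_col adjcZ !adjc_cmx -scalemxAl -scalemxAr scalerA -!cmxM.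
rewrite conjC_complex -[X in X + _]scale1r -scalerDl; congr (_ *: _).
by simpc.
Qed.

Lemma psiUpE n (x : 'cV[R]_n) : psiUp x = Complex (Num.sqrt 2)^-1 0 *: cstack 1 x.
Proof. by []. Qed.

Lemma psiUmE n (x : 'cV[R]_n) : psiUm x = Complex (Num.sqrt 2)^-1 0 *: cstack (-1) x.
Proof. by []. Qed.

Lemma adjc_cstack_normalized (t : R) n (x : 'cV[R]_n) : t ^+ 2 = 1 -> x^T *m x = 1%:M ->
  adjc (Complex (Num.sqrt 2)^-1 0 *: cstack t x) *m (Complex (Num.sqrt 2)^-1 0 *: cstack t x)
    = 1%:M.
Proof.
move=> t2 x_unit; rewrite adjcZ -scalemxAl -scalemxAr scalerA adjc_cstack_mul.
rewrite x_unit cmx1 scalerA scalemx1 conjC_complex; congr _%:M; simpc.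
by rewrite -[t * t]expr2 t2 -invfM -[Num.sqrt 2 * _]expr2 sqr_sqrtr // mulVf ?pnatr_eq0.
Qed.

Lemma cstack_pair_unitmx n (phi : 'M[R]_n) : phi^T *m phi = 1%:M ->
  row_mx (cstack 1 phi) (cstack (-1) phi) \in unitmx.
Proof.
move=> phi_orth; set Q := row_mx _ _.
have adjQ_Q : adjc Q *m Q = 2%:M.
  rewrite adjc_row_mx mul_col_row !adjc_cstack_mul phi_orth cmx1 !scalemx1.
  rewrite (scalar_mx_block n n 2); congr block_mx; simpc; by [
    rewrite -(rmorph_nat (real_complex R) 2) |
    rewrite -[(0*i)%C]/(0 : R[i]) -scalemx1 scale0r].
have /mulmx1_unit[] // : (2^-1 *: adjc Q) *m Q = 1%:M.
by rewrite -scalemxAl adjQ_Q scale_scalar_mx mulVf ?pnatr_eq0.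
Qed.

End Stack.

Lemma GmxS_cstack_eigen (R : realType) n (L : 'M[R]_n) (S : 'M[R]_(n + n))
    (x : 'cV[R]_n) (mu : R) :
  L^T = L -> is_inv_sqrt ((Gmx L)^T *m Gmx L) S -> L *m x = mu *: x ->
  cmx (Gmx L *m S) *m cstack 1 x = lamUp mu *: cstack 1 x /\
  cmx (Gmx L *m S) *m cstack (-1) x = lamUm mu *: cstack (-1) x.
Proof.
move=> L_sym S_inv_sqrt; rewrite -{1}(lamPplus_subV mu) => Lx.
have [UP UQ] := GmxS_rotation L_sym S_inv_sqrt (lamPplus_gt0 mu) Lx.
have N1_sqr : (-1 : R) ^+ 2 = 1 by rewrite sqrrN expr1n.
rewrite /lamUp /lamUm /theta cos_2atan sin_2atan !cstackE.
split; [move: (cmx_rotation_eigen UP UQ (expr1n _ 2)) | move: (cmx_rotation_eigen UP UQ N1_sqr)].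
  by rewrite mul1r.
by rewrite mulN1r.
Qed.

Lemma tr_laplacian (R : realType) n (e : rel 'I_n) :
  symmetric e -> (laplacian R e)^T = laplacian R e.
Proof.
move=> e_sym; rewrite /laplacian linearB /= /degmx tr_diag_mx; congr (_ - _).
by apply/matrixP => i j; rewrite !mxE e_sym.
Qed.

Theorem proposition7 (R : realType) (n : nat) (e : rel 'I_n)
  (e_sym : symmetric e) (e_irr : irreflexive e)
  (e_conn : forall i j : 'I_n, connect e i j)
  (phi : 'M[R]_n) (mu : 'I_n -> R)
  (phi_on : phi^T *m phi = 1%:M)
  (phi_eig : forall j : 'I_n,
      laplacian R e *m col j phi = mu j *: col j phi)
  (S : 'M[R]_(n + n))
  (hS : is_inv_sqrt ((Gmx (laplacian R e))^T *m Gmx (laplacian R e)) S) :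
  let U := Gmx (laplacian R e) *m S in
  char_poly (cmx U)
    = \prod_(j < n) (('X - (lamUp (mu j))%:P) * ('X - (lamUm (mu j))%:P))
  /\ (forall j : 'I_n,
        cmx U *m psiUp (col j phi) = lamUp (mu j) *: psiUp (col j phi)
     /\ cmx U *m psiUm (col j phi) = lamUm (mu j) *: psiUm (col j phi)
     /\ adjc (psiUp (col j phi)) *m psiUp (col j phi) = 1%:M
     /\ adjc (psiUm (col j phi)) *m psiUm (col j phi) = 1%:M).
Proof.
move=> U.
have eig j := GmxS_cstack_eigen (tr_laplacian R e_sym) hS (phi_eig j).
split=> [|j].
  set Q := row_mx (cstack 1 phi) (cstack (-1) phi).
  have UQ : cmx U *m Q = Q *m diag_mx (row_mx (\row_j lamUp (mu j)) (\row_j lamUm (mu j))).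
    rewrite mul_mx_row diag_mx_row mul_row_block !mulmx0 addr0 add0r.
    by congr row_mx; apply: mulmx_diag_eigen => j; rewrite col_cstack mxE; case: (eig j).
  rewrite (char_poly_similar (cstack_pair_unitmx phi_on) UQ).
  rewrite char_poly_trig ?diag_mx_is_trig // big_split_ord big_split /=.
  by congr (_ * _); apply: eq_bigr => j _; rewrite mxE eqxx mulr1n ?row_mxEl ?row_mxEr mxE.
have [eig_p eig_m] := eig j.
have col_orth : (col j phi)^T *m col j phi = 1%:M.
  rewrite tr_col rowE colE mulmxA -(mulmxA _ phi^T) phi_on mulmx1 mul_delta_mx.
  by apply/matrixP => a b; rewrite !ord1 !mxE.
rewrite !psiUpE !psiUmE.
split; first exact: mulmx_eigenZ eig_p.
split; first exact: mulmx_eigenZ eig_m.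
by split; apply: adjc_cstack_normalized col_orth; rewrite ?sqrrN expr1n.
Qed.
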